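(* Let $\varphi$ be a Boolean formula in 3-CNF and let $G$ be the graph constructed from $\varphi$ as described in the context. Let $C\subseteq V(G)$ be a minimum cluster deletion set of $G$. Then $C$ is a vertex cover of $G$. Hence $\mathrm{cvd}(G)=\mathrm{vc}(G)$.
   Context: Let $\varphi$ consist of clauses $C_1,\dots,C_m$ over variables $x_1,\dots,x_n$, each clause containing exactly three literals, $C_i=(L_i^1\vee L_i^2\vee L_i^3)$. The graph $G$ has vertex set $\{u_{r,s,i}: r\in\{1,2,3\}, s\in\{1,\dots,7\}, i\in\{1,\dots,m\}\}\cup\{v_{r,s,j}: r\in\{1,2\}, s\in\{1,2,3\}, j\in\{1,\dots,n\}\}$ and edge set consisting of: $\{u_{r,s,i},u_{r',s',i}\}$ for all $r\ne r'$ in $\{1,2,3\}$, all $s,s'\in\{1,\dots,7\}$, all $i$; $\{v_{1,s,j},v_{2,s',j}\}$ for all $s,s'\in\{1,2,3\}$, all $j$; $\{u_{r,s,i},v_{1,s',j}\}$ for all $s\in\{1,\dots,7\}$, $s'\in\{1,2,3\}$ whenever $L_i^r = x_j$; and $\{u_{r,s,i},v_{2,s',j}\}$ for all $s\in\{1,\dots,7\}$, $s'\in\{1,2,3\}$ whenever $L_i^r=\neg x_j$. A cluster deletion set of $G$ is a set $X\subseteq V(G)$ such that $G-X$ contains no induced path on three vertices; $\mathrm{cvd}(G)$ is the minimum size of such a set. A vertex cover is a set of vertices containing at least one endpoint of every edge; $\mathrm{vc}(G)$ is the minimum size of a vertex cover. *)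

From mathcomp Require Import all_boot.
Set Implicit Arguments. Unset Strict Implicit. Unset Printing Implicit Defensive.

Section Graph.
Variable T : finType.
Variable e : rel T.

(* G - X contains no induced path on three vertices a - b - c. *)
Definition is_cluster_deletion_set (X : {set T}) : bool :=
  [forall a : T, forall b : T, forall c : T,
    [&& a \notin X, b \notin X, c \notin X, a != c, e a b & e b c] ==> e a c].

Definition is_vertex_cover (X : {set T}) : bool :=
  [forall a : T, forall b : T, e a b ==> (a \in X) || (b \in X)].

Definition is_min_cluster_deletion_set (X : {set T}) : Prop :=
  is_cluster_deletion_set X /\
  forall Y : {set T}, is_cluster_deletion_set Y -> #|X| <= #|Y|.

(* minimum sizes (the full vertex set is always feasible, so #|T| is a safe seed) *)
Definition cvd : nat :=
  \big[minn/#|T|]_(X : {set T} | is_cluster_deletion_set X) #|X|.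
Definition vc : nat :=
  \big[minn/#|T|]_(X : {set T} | is_vertex_cover X) #|X|.
End Graph.

(* A 3-CNF formula with m clauses over n variables: literal r (r < 3) of
   clause i is [phi i r = (j, b)], meaning x_j if b = true and ~x_j if b = false. *)
Definition formula (n m : nat) := 'I_m -> 'I_3 -> 'I_n * bool.

(* Vertices: inl (r, s, i) = u_{r+1,s+1,i+1};  inr (a, s, j) = v_{a+1,s+1,j+1}. *)
Definition vert (n m : nat) : finType :=
  (('I_3 * 'I_7 * 'I_m) + ('I_2 * 'I_3 * 'I_n))%type.

Definition uv_edge n m (phi : formula n m) (r : 'I_3) (i : 'I_m) (a : 'I_2) (j : 'I_n) : bool :=
  let: (j0, b) := phi i r in (j0 == j) && ((nat_of_ord a == 0) == b).

Definition gedge n m (phi : formula n m) (x y : vert n m) : bool :=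
  match x, y with
  | inl (r, _, i), inl (r', _, i') => (r != r') && (i == i')
  | inr (a, _, j), inr (a', _, j') => (a != a') && (j == j')
  | inl (r, _, i), inr (a, _, j) => uv_edge phi r i a j
  | inr (a, _, j), inl (r, _, i) => uv_edge phi r i a j
  end.

From mathcomp Require Import all_boot.
From mathcomp Require Import zify.
Set Implicit Arguments. Unset Strict Implicit.

(* Suppose a minimum cluster deletion set X misses both ends of an edge u w.
   The copies of u (same row and clause or variable, other index s) are
   pairwise non-adjacent twins of u; at most one of them survives in G - X,
   since two surviving twins would be non-adjacent neighbours of w.  Deleting
   the neighbourhood of u instead of these twins isolates them and keeps a
   cluster deletion set.  This is cheaper: for u = u_{r,s,i} the surviving
   neighbours of u form a clique, hence have distinct colours in the proper
   colouring u_{r,_,_} |-> r, v_{a,_,_} |-> a, so at most 4 of them survive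
   against 6 deleted twins; for u = v_{a,s,j} the edge u w lies in no
   triangle, so w is the only surviving neighbour against 2 deleted twins.
   Since every vertex cover is a cluster deletion set, cvd(G) = vc(G). *)

Section ClusterDeletion.
Variables (T : finType) (e : rel T).

Lemma cds_trans X a b c : is_cluster_deletion_set e X ->
  a \notin X -> b \notin X -> c \notin X -> a != c -> e a b -> e b c -> e a c.
Proof.
move=> /forallP /(_ a) /forallP /(_ b) /forallP /(_ c) /implyP cdsX aX bX cX ac ab bc.
by apply: cdsX; rewrite aX bX cX ac ab bc.
Qed.

Lemma vertex_cover_cds X : is_vertex_cover e X -> is_cluster_deletion_set e X.
Proof.
move=> /forallP coverX; apply/forallP => a; apply/forallP => b; apply/forallP => c.
apply/implyP => /and5P [aX bX _ _ /andP [ab _]].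
by move/forallP: (coverX a) => /(_ b) /implyP /(_ ab); rewrite (negbTE aX) (negbTE bX).
Qed.

Lemma leq_bigmin_card (P : pred {set T}) Y :
  P Y -> \big[minn/#|T|]_(X : {set T} | P X) #|X| <= #|Y|.
Proof.
move=> PY; rewrite -big_filter.
have : Y \in [seq X <- index_enum {set T} | P X] by rewrite mem_filter PY mem_index_enum.
elim: [seq X <- _ | _] => [//|X s IHs]; rewrite big_cons inE.
case/orP=> [/eqP <-|/IHs]; first exact: geq_minl.
exact: leq_trans (geq_minr _ _).
Qed.

Lemma bigmin_card_attained (P : pred {set T}) :
  P setT -> exists2 X, P X & \big[minn/#|T|]_(X : {set T} | P X) #|X| = #|X|.
Proof.
move=> PT; apply: (big_ind (fun k => exists2 X, P X & k = #|X|)).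
- by exists setT; rewrite ?cardsT.
- move=> _ _ [X1 PX1 ->] [X2 PX2 ->].
  have [le12|lt21] := leqP #|X1| #|X2|.
    by exists X1 => //; apply/minn_idPl.
  by exists X2 => //; apply/minn_idPr/ltnW.
- by move=> X PX; exists X.
Qed.

Lemma cvd_eq_vc :
  (forall X, is_min_cluster_deletion_set e X -> is_vertex_cover e X) ->
  cvd e = vc e.
Proof.
move=> min_cover.
have cdsT : is_cluster_deletion_set e setT.
  by apply/forallP => a; apply/forallP => b; apply/forallP => c; rewrite in_setT.
have coverT : is_vertex_cover e setT.
  by apply/forallP => a; apply/forallP => b; rewrite in_setT implybT.
have [X cdsX cvdE] := bigmin_card_attained cdsT.
have [Z coverZ vcE] := bigmin_card_attained coverT.
have minX : is_min_cluster_deletion_set e X.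
  by split=> // Y cdsY; rewrite -cvdE; apply: leq_bigmin_card.
rewrite /cvd /vc; apply/eqP; rewrite eqn_leq; apply/andP; split.
- by rewrite vcE; apply/leq_bigmin_card/vertex_cover_cds.
- by rewrite cvdE; apply/leq_bigmin_card/min_cover.
Qed.

Hypothesis e_sym : symmetric e.

Lemma cds_nbr_adj X u x y : is_cluster_deletion_set e X ->
  u \notin X -> x \notin X -> y \notin X -> x != y -> e u x -> e u y -> e x y.
Proof.
move=> cdsX uX xX yX xy ux uy.
by apply: (cds_trans cdsX xX uX yX xy); rewrite // e_sym.
Qed.

Lemma card_exchange (X A N : {set T}) :
  #|(X :|: N) :\: A| + #|A :&: X| <= #|X| + #|N :\: X|.
Proof.
have splitA := cardsID A (X :|: N).
have unionXN := cardsUI X N.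
have splitN := cardsID X N.
have AX_sub : #|A :&: X| <= #|A :&: (X :|: N)|.
  by apply/subset_leq_card/setIS/subsetUl.
rewrite [N :&: X]setIC [(X :|: N) :&: A]setIC in splitN splitA; lia.
Qed.

Lemma cds_exchange (X A N : {set T}) : is_cluster_deletion_set e X ->
  {in A &, forall x y, ~~ e x y} -> (forall x y, x \in A -> e x y -> y \in N) ->
  is_cluster_deletion_set e ((X :|: N) :\: A).
Proof.
move=> cdsX indA nbrN.
have isolated x y : x \in A -> y \notin (X :|: N) :\: A -> ~~ e x y.
  move=> xA; rewrite !inE negb_and negbK negb_or => /orP [yA|/andP [_ yN]].
    exact: indA.
  by apply: contra yN; apply: nbrN.
apply/forallP => a; apply/forallP => b; apply/forallP => c; apply/implyP.
case/and5P=> aY bY cY ac /andP [ab bc].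
have [bA|bA] := boolP (b \in A).
  by rewrite e_sym (negbTE (isolated _ _ bA aY)) in ab.
have [aA|aA] := boolP (a \in A); first by rewrite (negbTE (isolated _ _ aA bY)) in ab.
have [cA|cA] := boolP (c \in A).
  by rewrite e_sym (negbTE (isolated _ _ cA bY)) in bc.
move: aY bY cY; rewrite !inE aA bA cA !negb_or /=.
move=> /andP [aX _] /andP [bX _] /andP [cX _].
exact: (cds_trans cdsX aX bX cX).
Qed.

Lemma min_cds_exchange (X A N : {set T}) : is_min_cluster_deletion_set e X ->
  {in A &, forall x y, ~~ e x y} -> (forall x y, x \in A -> e x y -> y \in N) ->
  #|A :&: X| <= #|N :\: X|.
Proof.
case=> cdsX minX indA nbrN.
have := card_exchange X A N; have := minX _ (cds_exchange cdsX indA nbrN); lia.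
Qed.

Lemma min_cds_twins X (A : {set T}) u w : is_min_cluster_deletion_set e X ->
  u \in A -> {in A &, forall x y, ~~ e x y} -> {in A, forall x, e x =1 e u} ->
  u \notin X -> w \notin X -> e u w ->
  #|A| <= #|[set y | e u y] :\: X| + 1.
Proof.
move=> minX uA indA twinA uX wX uw.
have : #|A :&: X| <= #|[set y | e u y] :\: X|.
  by apply: min_cds_exchange => // x y xA; rewrite inE -(twinA _ xA).
suff : #|A :\: X| <= 1 by have := cardsID X A; rewrite setIC; lia.
rewrite -(cards1 u); apply/subset_leq_card/subsetP => x; rewrite !inE.
case/andP=> xX xA; apply: contraTT (indA _ _ xA uA) => xu.
by rewrite negbK (cds_nbr_adj minX.1 wX) // e_sym ?twinA.
Qed.

Lemma cds_nbr_colouring (K : finType) (c : T -> K) X u :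
  (forall x y, e x y -> c x != c y) -> is_cluster_deletion_set e X -> u \notin X ->
  #|[set y | e u y] :\: X| = #|c @: ([set y | e u y] :\: X)|.
Proof.
move=> colour cdsX uX; apply/esym/card_in_imset => x y.
rewrite !inE => /andP [xX ux] /andP [yX uy] /eqP cxy; apply/eqP.
by apply: contraTT cxy => xy; apply/colour/(cds_nbr_adj cdsX uX).
Qed.

Lemma cds_nbr_triangle_free X u w : is_cluster_deletion_set e X ->
  u \notin X -> w \notin X -> e u w -> (forall y, e u y -> ~~ e w y) ->
  #|[set y | e u y] :\: X| <= 1.
Proof.
move=> cdsX uX wX uw no_common.
rewrite -(cards1 w); apply/subset_leq_card/subsetP => y; rewrite !inE.
case/andP=> yX uy; apply: contraTT (no_common _ uy) => yw.
by rewrite negbK (cds_nbr_adj cdsX uX) // eq_sym.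
Qed.

End ClusterDeletion.

Section Reduction.
Variables (n m : nat) (phi : formula n m).
Local Notation e := (gedge phi).
Local Notation V := (vert n m).

Lemma gedge_sym : symmetric e.
Proof.
move=> [[[r s] i]|[[a s] j]] [[[r' s'] i']|[[a' s'] j']] //=.
- by rewrite eq_sym (eq_sym i).
- by rewrite eq_sym (eq_sym j).
Qed.

Definition colour (x : V) : 'I_3 + 'I_2 :=
  match x with inl (r, _, _) => inl r | inr (a, _, _) => inr a end.

Lemma gedge_colour x y : e x y -> colour x != colour y.
Proof.
by case: x y => [[[r s] i]|[[a s] j]] [[[r' s'] i']|[[a' s'] j']] //= /andP [].
Qed.

Lemma ord2_eq (a a' : 'I_2) : (a == 0 :> nat) = (a' == 0 :> nat) -> a = a'.
Proof. by move=> eq0; apply: val_inj => /=; move: (ltn_ord a) (ltn_ord a') eq0; lia. Qed.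

Lemma gedge_v_no_common_nbr a s j a' s' :
  e (inr (a, s, j)) (inr (a', s', j)) ->
  forall y, e (inr (a, s, j)) y -> ~~ e (inr (a', s', j)) y.
Proof.
move=> /= /andP [aa' _]; case => [[[r t] i]|[[a'' t] j'']] /=.
- rewrite /uv_edge; case: (phi i r) => j0 b /andP [_ /eqP ab].
  apply: contra aa' => /andP [_ /eqP a'b]; apply/eqP/ord2_eq; congruence.
- move=> /andP [aa'' _]; apply/nandP; left; rewrite negbK.
  move: aa' aa''; rewrite -!val_eqE /=.
  by move: (ltn_ord a) (ltn_ord a') (ltn_ord a''); lia.
Qed.

Lemma min_cds_u_edge X r s i w : is_min_cluster_deletion_set e X ->
  (inl (r, s, i) : V) \notin X -> w \notin X -> ~~ e (inl (r, s, i)) w.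
Proof.
move=> minX uX wX; apply/negP => uw.
pose A := [set (inl (r, t, i) : V) | t : 'I_7].
have cardA : #|A| = 7 by rewrite card_imset ?card_ord // => t1 t2 [].
have uA : (inl (r, s, i) : V) \in A by apply/imsetP; exists s.
have indA : {in A &, forall x y, ~~ e x y}.
  by move=> _ _ /imsetP [t1 _ ->] /imsetP [t2 _ ->]; rewrite /= eqxx.
have twinA : {in A, forall x, e x =1 e (inl (r, s, i))} by move=> _ /imsetP [t _ ->].
have nbr_colours : #|colour @: ([set y | e (inl (r, s, i)) y] :\: X)| <= 4.
  apply: (@leq_trans #|[set~ (inl r : 'I_3 + 'I_2)]|); last first.
    by rewrite cardsC1 card_sum !card_ord.
  apply/subset_leq_card/subsetP => _ /imsetP [[[[r' t] i']|[[a t] j]] + ->];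
    rewrite !inE // => /andP [_ /andP [rr' _]].
  by rewrite eq_sym.
have twins := min_cds_twins gedge_sym minX uA indA twinA uX wX uw.
rewrite cardA (cds_nbr_colouring gedge_sym gedge_colour minX.1 uX) in twins.
by have := leq_trans twins (leq_add nbr_colours (leqnn 1)).
Qed.

Lemma min_cds_v_edge X a s j a' s' j' : is_min_cluster_deletion_set e X ->
  (inr (a, s, j) : V) \notin X -> (inr (a', s', j') : V) \notin X ->
  ~~ e (inr (a, s, j)) (inr (a', s', j')).
Proof.
move=> minX vX wX; apply/negP => vw.
have /andP [_ /eqP jj'] := vw; subst j'.
pose A := [set (inr (a, t, j) : V) | t : 'I_3].
have cardA : #|A| = 3 by rewrite card_imset ?card_ord // => t1 t2 [].
have vA : (inr (a, s, j) : V) \in A by apply/imsetP; exists s.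
have indA : {in A &, forall x y, ~~ e x y}.
  by move=> _ _ /imsetP [t1 _ ->] /imsetP [t2 _ ->]; rewrite /= eqxx.
have twinA : {in A, forall x, e x =1 e (inr (a, s, j))} by move=> _ /imsetP [t _ ->].
have := min_cds_twins gedge_sym minX vA indA twinA vX wX vw.
have := cds_nbr_triangle_free gedge_sym minX.1 vX wX vw (gedge_v_no_common_nbr vw).
by rewrite cardA; lia.
Qed.

Lemma min_cds_vertex_cover X :
  is_min_cluster_deletion_set e X -> is_vertex_cover e X.
Proof.
move=> minX; apply/forallP => x; apply/forallP => y; apply/implyP => xy.
apply/negPn/negP; rewrite negb_or => /andP [xX yX].
case: x xy xX => [[[r s] i]|[[a s] j]] xy xX.
  by move: (min_cds_u_edge minX xX yX); rewrite xy.
case: y xy yX => [[[r s'] i]|[[a' s'] j']] xy yX.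
  by move: (min_cds_u_edge minX yX xX); rewrite gedge_sym xy.
by move: (min_cds_v_edge minX xX yX); rewrite xy.
Qed.

End Reduction.

Theorem lemma12 (n m : nat) (phi : formula n m) :
  (forall C : {set vert n m},
      is_min_cluster_deletion_set (gedge phi) C -> is_vertex_cover (gedge phi) C) /\
  cvd (gedge phi) = vc (gedge phi).
Proof.
split; first exact: min_cds_vertex_cover.
exact/cvd_eq_vc/min_cds_vertex_cover.
Qed.
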